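(* Let $G=(V,E)$ be a finite simple connected graph with graph distance $d$, let $S$ be a multiset of $s$ vertices, $\delta>0$, and $\Phi^{*}(v)=\sum_{u\in S}d(u,v)$. Let $q$ be a vertex such that $\Phi^{*}(q)\le\Phi^{*}(v)+\delta s$ for every $v\in N(q)$. Then $\Lambda^{*}(q)\le\frac{s(1+\delta)}{2}$.
   Context: For vertices $q,v$, a vertex $u$ is consistent with $(q,v)$ if $q=v=u$, or $q\ne v$ and $v$ lies on a shortest path between $u$ and $q$; $N(q,v)$ is the set of such $u$. $N(q)$ is the neighbor set of $q$. $\Lambda^{*}(q)=\max_{v\in N(q)}|S\cap N(q,v)|$, where $S\cap X$ is the multiset of elements of $S$ lying in $X$ (with multiplicity); sums over $S$ are with multiplicity. *)

From HB Require Import structures.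
From mathcomp Require Import all_boot all_order all_algebra.
Set Implicit Arguments. Unset Strict Implicit. Unset Printing Implicit Defensive.
Import Order.TTheory GRing.Theory Num.Theory.

Definition simple_graph (T : finType) (e : rel T) : Prop :=
  symmetric e /\ irreflexive e.

Definition connected_graph (T : finType) (e : rel T) : Prop :=
  forall x y : T, connect e x y.

Definition walk_of_len (T : finType) (e : rel T) (x y : T) (n : nat) : bool :=
  [exists p : n.-tuple T, path e x p && (last x p == y)].

(* graph distance: least length of a walk from x to y (searched among
   0 .. #|T|-1, which suffices in a connected graph) *)
Definition gdist (T : finType) (e : rel T) (x y : T) : nat :=
  find (walk_of_len e x y) (iota 0 #|T|).

Definition consistent (T : finType) (e : rel T) (q v u : T) : bool :=
  ((q == v) && (v == u)) ||
  ((q != v) && (gdist e u q == gdist e u v + gdist e v q)).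

Definition Phi (T : finType) (e : rel T) (S : seq T) (v : T) : nat :=
  \sum_(u <- S) gdist e u v.

Definition Lambda (T : finType) (e : rel T) (S : seq T) (q : T) : nat :=
  \max_(v | e q v) count (consistent e q v) S.

(* Fix a neighbour v of q. Every u in S is at distance at most d(u,q)+1 from v,
   and if u is consistent with (q,v) then d(u,v) = d(u,q) - d(v,q) <= d(u,q) - 1.
   Summing over S gives Phi*(v) + 2 |S ∩ N(q,v)| <= Phi*(q) + s, and combined
   with Phi*(q) <= Phi*(v) + delta s this yields 2 |S ∩ N(q,v)| <= s (1 + delta). *)

From mathcomp Require Import all_boot all_order all_algebra.
From mathcomp Require Import lra zify.
Import Order.TTheory GRing.Theory Num.Theory.

Set Implicit Arguments. Unset Strict Implicit.

Section GraphDistance.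
Variables (T : finType) (e : rel T).

Lemma gdist_le_walk x y n :
  n < #|T| -> walk_of_len e x y n -> gdist e x y <= n.
Proof.
move=> lt_n_T walk_n; rewrite leqNgt; apply/negP => lt_n_d.
by have := before_find 0 lt_n_d; rewrite nth_iota // add0n walk_n.
Qed.

Lemma walk_of_len_rcons x y z n :
  walk_of_len e x y n -> e y z -> walk_of_len e x z n.+1.
Proof.
case/existsP=> p /andP[e_p /eqP last_p] e_yz; apply/existsP.
have size_pz : size (rcons p z) == n.+1 by rewrite size_rcons size_tuple.
exists (Tuple size_pz).
by rewrite /= rcons_path e_p last_p e_yz last_rcons eqxx.
Qed.

(* Loop removal shortens any walk to a duplicate-free one, of length < #|T|. *)
Lemma has_walk_of_len x y :
  connect e x y -> has (walk_of_len e x y) (iota 0 #|T|).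
Proof.
case/connectP=> p e_p ->; case: (shortenP e_p) => p' e_p' uniq_p' _.
apply/hasP; exists (size p'); last first.
  by apply/existsP; exists (in_tuple p'); rewrite e_p' eqxx.
rewrite mem_iota add0n /=.
by have := max_card (mem (x :: p')); rewrite (card_uniqP uniq_p').
Qed.

Lemma gdist_lt_card x y : connect e x y -> gdist e x y < #|T|.
Proof. by move/has_walk_of_len; rewrite has_find size_iota. Qed.

Lemma walk_of_len_gdist x y : connect e x y -> walk_of_len e x y (gdist e x y).
Proof.
move=> conn_xy; have := nth_find 0 (has_walk_of_len conn_xy).
by rewrite nth_iota ?add0n // gdist_lt_card.
Qed.

Lemma gdist_gt0 x y : connect e x y -> x != y -> 0 < gdist e x y.
Proof.
move=> /walk_of_len_gdist + neq_xy; rewrite lt0n; apply: contraTneq => ->.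
apply/negP => /existsP[p /andP[_]]; by rewrite tuple0 (negbTE neq_xy).
Qed.

Lemma gdist_edge_le u q v :
  connect e u q -> e q v -> gdist e u v <= (gdist e u q).+1.
Proof.
move=> conn_uq e_qv.
have [lt_T | le_T] := ltnP (gdist e u q).+1 #|T|.
  exact: gdist_le_walk lt_T (walk_of_len_rcons (walk_of_len_gdist conn_uq) e_qv).
have conn_uv := connect_trans conn_uq (connect1 e_qv).
exact: leq_trans (ltnW (gdist_lt_card conn_uv)) le_T.
Qed.

End GraphDistance.

Section Potential.
Variables (T : finType) (e : rel T).
Hypotheses (e_irr : irreflexive e) (e_conn : connected_graph e).

Lemma gdist_consistent_le u q v :
  e q v -> gdist e u v + 2 * consistent e q v u <= (gdist e u q).+1.
Proof.
move=> e_qv; have neq_qv : q != v by apply: contraTneq e_qv => ->; rewrite e_irr.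
have := gdist_edge_le (e_conn u q) e_qv.
rewrite /consistent (negbTE neq_qv) /=.
have [->|_] := eqP; last by rewrite muln0 addn0.
have := gdist_gt0 (e_conn v q); rewrite eq_sym neq_qv; lia.
Qed.

Lemma Phi_count_consistent_le (S : seq T) q v :
  e q v -> Phi e S v + 2 * count (consistent e q v) S <= Phi e S q + size S.
Proof.
move=> e_qv; rewrite /Phi; elim: S => [|u S IH]; first by rewrite !big_nil.
by rewrite !big_cons /=; have := gdist_consistent_le u e_qv; lia.
Qed.

End Potential.

Local Open Scope ring_scope.

Theorem lemma13 (R : realFieldType) (T : finType) (e : rel T)
  (S : seq T) (delta : R) (q : T) :
  simple_graph e -> connected_graph e -> 0 < delta ->
  (forall v : T, e q v ->
     (Phi e S q)%:R <= (Phi e S v)%:R + delta * (size S)%:R) ->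
  (Lambda e S q)%:R <= (size S)%:R * (1 + delta) / 2.
Proof.
move=> [_ e_irr] e_conn delta_gt0 q_near_min.
apply: (big_ind (fun m : nat => m%:R <= (size S)%:R * (1 + delta) / 2)).
- by apply: divr_ge0 => //; apply: mulr_ge0 => //; lra.
- by move=> a b le_a le_b; case: leqP.
move=> v e_qv; have := q_near_min v e_qv.
have := Phi_count_consistent_le e_irr e_conn S e_qv.
rewrite -(ler_nat R) natrD natrM natrD.
have : 0 <= delta * (size S)%:R by rewrite mulr_ge0 ?(ltW delta_gt0).
lra.
Qed.
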